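(* Let $q\ge1$ and $t$ be integers with $0\le t<q$, and let $\mathcal{C}_{q,t}^{\mathrm{det}}=\bigcup_{i=0}^{\lfloor (q-1)/(t+1)\rfloor}\mathcal{S}_{q-i(t+1)}^q.$ Then $\mathcal{C}_{q,t}^{\mathrm{det}}$ is a $t$-tail-deletion-detecting code, and it is optimal, i.e. $\mathsf{DEL}_{\mathrm{det}}(q,t)=|\mathcal{C}_{q,t}^{\mathrm{det}}|=\sum_{i=0}^{\lfloor (q-1)/(t+1)\rfloor}|\mathcal{S}_{q-i(t+1)}^q|=q!\sum_{i=0}^{\lfloor (q-1)/(t+1)\rfloor}\frac{1}{(i(t+1))!}.$
   Context: Let $[q]=\{0,1,\dots,q-1\}$. For $1\le m\le q$, a partial permutation of length $m$ over $[q]$ is a sequence $\pi=(\pi_1,\dots,\pi_m)$ of $m$ pairwise distinct elements of $[q]$. Let $\mathcal{S}_m^q$ be the set of those of length $m$ and $\mathcal{S}_{\mathrm{all}}^q=\bigcup_{m=1}^{q}\mathcal{S}_m^q$. A code is any subset of $\mathcal{S}_{\mathrm{all}}^q$. For $\pi$ of length $m$ and integer $j\ge 0$, $\pi_{\downarrow j}=(\pi_{k+1},\dots,\pi_m)$ with $k=\min(j,m-1)$ (leftmost symbols are deleted; the last symbol is never deleted); $\mathcal{B}_{\mathrm{del}}^t(\pi)=\{\pi_{\downarrow j}:0\le j\le t\}$. A code $\mathcal{C}$ is $t$-tail-deletion-detecting if $\mathcal{C}\cap\mathcal{B}_{\mathrm{del}}^t(\pi)=\{\pi\}$ for every $\pi\in\mathcal{C}$.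 $\mathsf{DEL}_{\mathrm{det}}(q,t)$ denotes the maximum size of a $t$-tail-deletion-detecting code in $\mathcal{S}_{\mathrm{all}}^q$. *)

From mathcomp Require Import all_boot all_order all_algebra.
Unset Printing Implicit Defensive.

Definition pperm (q : nat) (s : seq 'I_q) : bool :=
  uniq s && (0 < size s <= q).

Definition tail_del (q : nat) (j : nat) (s : seq 'I_q) : seq 'I_q :=
  drop (minn j (size s).-1) s.

(* A code is a finite set of partial permutations, represented by a
   duplicate-free list [C] (all codes are finite since S_all^q is finite).
   t-tail-deletion-detecting: C ∩ B_del^t(pi) = {pi} for every pi in C.
   (pi itself is in B_del^t(pi) via j = 0, so this says every element of
   the ball lying in C equals pi.) *)
Definition tdd_code (q t : nat) (C : seq (seq 'I_q)) : Prop :=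
  forall p, p \in C -> forall j, j <= t -> tail_del q j p \in C -> tail_del q j p = p.

Definition is_code (q : nat) (C : seq (seq 'I_q)) : Prop :=
  uniq C /\ all (pperm q) C.

Definition is_DEL_det (q t n : nat) : Prop :=
  (exists C : seq (seq 'I_q), is_code q C /\ tdd_code q t C /\ size C = n) /\
  (forall C : seq (seq 'I_q), is_code q C -> tdd_code q t C -> size C <= n).

Definition in_Cdet (q t : nat) (s : seq 'I_q) : bool :=
  pperm q s && has (fun i => size s == q - i * t.+1) (iota 0 ((q - 1) %/ t.+1).+1).

From mathcomp Require Import all_boot all_order all_algebra.
From mathcomp Require Import zify.
Import GRing.Theory Num.Theory.

(* A partial permutation lies in C_det exactly when its length m satisfies
   1 <= m <= q and t+1 | q - m.  Deleting j <= t leading symbols changes the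
   length by less than t+1, so the result can only stay in C_det if nothing
   was deleted.  For optimality, complete each word p of a t-tail-deletion-
   detecting code C by prepending (q - |p|) mod (t+1) <= t unused symbols.
   This lands in C_det, and if |p| <= |p'| have the same completion then p is
   p' with |p'| - |p| <= t leading symbols deleted, so p = p' since C detects
   this.  Hence |C| <= |C_det|, and |S_m^q| = q!/(q-m)! gives the formula. *)

Section FiniteAlphabet.
Variable T : finType.

Definition pad_front (n : nat) (p : seq T) : seq T :=
  take n [seq x <- enum T | x \notin p] ++ p.

Lemma size_unused (p : seq T) :
  uniq p -> size [seq x <- enum T | x \notin p] = #|T| - size p.
Proof.
move=> up; rewrite -(card_uniqP up) -(cardC (mem p)) addKn.
rewrite cardE /enum_mem -filter_predI; congr size.
by apply: eq_filter => x; rewrite /= !inE andbT.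
Qed.

Lemma uniq_pad_front n p : uniq p -> uniq (pad_front n p).
Proof.
move=> up; rewrite cat_uniq up andbT.
rewrite take_uniq ?(filter_uniq _ (enum_uniq T)) //.
by apply/hasPn=> x xp; apply/negP=> /mem_take; rewrite mem_filter xp.
Qed.

Section Fits.
Variables (n : nat) (p : seq T).
Hypotheses (up : uniq p) (fits : n + size p <= #|T|).

Lemma size_take_unused : size (take n [seq x <- enum T | x \notin p]) = n.
Proof. by rewrite size_takel // size_unused //; lia. Qed.

Lemma size_pad_front : size (pad_front n p) = n + size p.
Proof. by rewrite size_cat size_take_unused. Qed.

Lemma drop_pad_front : drop n (pad_front n p) = p.
Proof. by rewrite -{1}size_take_unused drop_size_cat. Qed.
End Fits.

Definition uniq_tuples (n : nat) : seq (seq T) :=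
  [seq val s | s <- enum [set s : n.-tuple T | uniq s]].

Lemma mem_uniq_tuples n s : (s \in uniq_tuples n) = (size s == n) && uniq s.
Proof.
apply/mapP/andP=> [[u] | [/eqP sz us]].
  by rewrite mem_enum inE => us ->; rewrite size_tuple.
by exists (Tuple (introT eqP sz)); rewrite ?mem_enum ?inE.
Qed.

Lemma uniq_uniq_tuples n : uniq (uniq_tuples n).
Proof. by rewrite map_inj_uniq ?enum_uniq //; apply: val_inj. Qed.

Lemma size_uniq_tuples n :
  size (uniq_tuples n) = #|[set s : n.-tuple T | uniq s]|.
Proof. by rewrite size_map -cardE. Qed.

Lemma card_set_uniq_tuples n : #|[set s : n.-tuple T | uniq s]| = #|T| ^_ n.
Proof.
rewrite -(card_uniq_tuples n predT).
by apply: eq_card => s; rewrite !inE all_predT.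
Qed.
End FiniteAlphabet.

Arguments pad_front {T}.

Lemma uniq_flatten_sized (T : eqType) (F : nat -> seq (seq T)) (ns : seq nat) :
  uniq ns -> (forall n, uniq (F n)) -> (forall n s, s \in F n -> size s = n) ->
  uniq (flatten [seq F n | n <- ns]).
Proof.
move=> + uF szF; elim: ns => //= n ns IH /andP[nns /IH{}IH].
rewrite cat_uniq uF IH andbT /=; apply/hasP=> -[s /flattenP[_ /mapP[m mns ->]]].
by move=> /szF szm /szF szn; move: nns; rewrite -szn szm mns.
Qed.

Section TailDeletionDetecting.
Variables q t : nat.
Hypothesis q_gt0 : 0 < q.
Implicit Types (p s : seq 'I_q) (C : seq (seq 'I_q)).

Definition Cdet_lengths : seq nat :=
  [seq q - i * t.+1 | i <- iota 0 ((q - 1) %/ t.+1).+1].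

Lemma mem_Cdet_lengths m :
  (m \in Cdet_lengths) = (0 < m <= q) && (t.+1 %| q - m).
Proof.
apply/mapP/andP=> [[i] | [/andP[m_gt0 m_le] /dvdnP[i def_i]]].
  rewrite mem_iota ltnS => /andP[_ le_i] ->.
  have : i * t.+1 <= q - 1 by rewrite -leq_divRL.
  by split; [lia | rewrite subKn ?dvdn_mull //; lia].
exists i; last lia.
by rewrite mem_iota ltnS leq_divRL //; lia.
Qed.

Lemma in_CdetE s :
  in_Cdet q t s = [&& uniq s, 0 < size s <= q & t.+1 %| q - size s].
Proof.
rewrite /in_Cdet /pperm (_ : has _ _ = (size s \in Cdet_lengths)).
  by rewrite mem_Cdet_lengths; case: (uniq s); case: (0 < size s <= q).
by rewrite -has_pred1 has_map; apply: eq_has => i; apply: eq_sym.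
Qed.

Lemma Cdet_tail_del_eq p j : in_Cdet q t p -> j <= t ->
  in_Cdet q t (tail_del q j p) -> tail_del q j p = p.
Proof.
rewrite !in_CdetE /tail_del size_drop => /and3P[_ /andP[_ p_le] dvd_p] le_jt.
case/and3P=> _ _; set d := minn j _.
have -> : q - (size p - d) = (q - size p) + d by lia.
rewrite dvdn_addr // => dvd_d.
have [-> | d_gt0] := posnP d; first by rewrite drop0.
by have := dvdn_leq d_gt0 dvd_d; lia.
Qed.

Definition pad_len (m : nat) : nat := (q - m) %% t.+1.

Definition complete p : seq 'I_q := pad_front (pad_len (size p)) p.

Lemma pad_len_le m : pad_len m <= t.
Proof. by rewrite -ltnS ltn_mod. Qed.

Lemma complete_fits p : size p <= q -> pad_len (size p) + size p <= #|'I_q|.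
Proof.
by rewrite card_ord /pad_len; have := leq_mod (q - size p) t.+1; lia.
Qed.

Lemma complete_Cdet p : pperm q p -> in_Cdet q t (complete p).
Proof.
case/and3P=> up p_gt0 /complete_fits fits.
rewrite in_CdetE uniq_pad_front // size_pad_front //.
rewrite card_ord in fits.
apply/and3P; split=> //; first by rewrite fits addn_gt0 p_gt0 orbT.
by rewrite addnC subnDA {1}(divn_eq (q - size p) t.+1) addnK dvdn_mull.
Qed.

Lemma complete_inj C :
  is_code q C -> tdd_code q t C -> {in C &, injective complete}.
Proof.
move=> [_ /allP ppC] tddC.
suff le_inj p p' : p \in C -> p' \in C -> size p <= size p' ->
    complete p = complete p' -> p = p'.
  move=> p p' pC p'C; have [le_pp' | /ltnW le_p'p] := leqP (size p) (size p').
    exact: le_inj.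
  by move=> eq_c; apply/esym/le_inj.
move=> pC p'C le_pp' eq_c.
have /and3P[up p_gt0 /complete_fits fits] := ppC p pC.
have /and3P[up' _ /complete_fits fits'] := ppC p' p'C.
have eq_sz : pad_len (size p) + size p = pad_len (size p') + size p'.
  by have := congr1 size eq_c; rewrite /complete !size_pad_front.
have le_pad := pad_len_le (size p).
have def_p : p = drop (size p' - size p) p'.
  have pad_eq : pad_len (size p) = size p' - size p + pad_len (size p').
    by lia.
  transitivity (drop (pad_len (size p)) (complete p)).
    by rewrite drop_pad_front.
  by rewrite eq_c pad_eq -drop_drop /complete drop_pad_front.
have tail_p : tail_del q (size p' - size p) p' = p.
  by rewrite /tail_del (_ : minn _ _ = size p' - size p) -?def_p //; lia.
have le_d : size p' - size p <= t by lia.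
by rewrite -tail_p; apply: tddC; rewrite ?tail_p.
Qed.

Definition Cdet : seq (seq 'I_q) :=
  flatten [seq uniq_tuples 'I_q n | n <- Cdet_lengths].

Lemma mem_Cdet s : (s \in Cdet) = in_Cdet q t s.
Proof.
rewrite in_CdetE -mem_Cdet_lengths andbC; apply/flattenP/andP.
  by case=> _ /mapP[n nL ->]; rewrite mem_uniq_tuples => /andP[/eqP ->].
case=> sL us; exists (uniq_tuples 'I_q (size s)); first exact: map_f.
by rewrite mem_uniq_tuples eqxx.
Qed.

Lemma uniq_Cdet : uniq Cdet.
Proof.
apply: uniq_flatten_sized => [|n | n s]; last 2 first.
- exact: uniq_uniq_tuples.
- by rewrite mem_uniq_tuples => /andP[/eqP].
rewrite map_inj_in_uniq ?iota_uniq // => i j.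
rewrite !mem_iota !ltnS !leq_divRL // => /andP[_ le_i] /andP[_ le_j] eq_ij.
have /eqP : i * t.+1 = j * t.+1 by lia.
by rewrite eqn_mul2r => /eqP.
Qed.

Lemma size_Cdet : size Cdet =
  \sum_(i < ((q - 1) %/ t.+1).+1)
     #|[set s : (q - i * t.+1).-tuple 'I_q | uniq s]|.
Proof.
pose F i := #|[set s : (q - i * t.+1).-tuple 'I_q | uniq s]|.
rewrite -(big_mkord xpredT F) /index_iota subn0.
rewrite size_flatten /shape sumnE !big_map.
by apply: eq_bigr => i _; rewrite size_uniq_tuples.
Qed.

Lemma tdd_Cdet : tdd_code q t Cdet.
Proof. by move=> p + j; rewrite !mem_Cdet; apply: Cdet_tail_del_eq. Qed.

Lemma is_code_Cdet : is_code q Cdet.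
Proof.
split; first exact: uniq_Cdet.
by apply/allP=> s; rewrite mem_Cdet => /andP[].
Qed.

Lemma tdd_code_size_le C : is_code q C -> tdd_code q t C -> size C <= size Cdet.
Proof.
move=> codeC tddC; have [uC /allP ppC] := codeC.
rewrite -(size_map complete); apply: uniq_leq_size.
  by rewrite map_inj_in_uniq //; apply: complete_inj.
by move=> _ /mapP[p pC ->]; rewrite mem_Cdet complete_Cdet // ppC.
Qed.

Lemma is_DEL_det_Cdet : is_DEL_det q t (size Cdet).
Proof.
split; last exact: tdd_code_size_le.
by exists Cdet; split; [exact: is_code_Cdet | split; [exact: tdd_Cdet | ]].
Qed.

End TailDeletionDetecting.

Local Open Scope ring_scope.

Lemma natr_ffact (R : numFieldType) (n m : nat) :
  (m <= n)%N -> (n ^_ m)%:R = (n`!)%:R / ((n - m)`!)%:R :> R.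
Proof.
move=> le_mn; rewrite -(ffact_fact le_mn) natrM mulfK //.
by rewrite pnatr_eq0 -lt0n fact_gt0.
Qed.

Theorem mainTheorem8 (q t : nat) (hq : (1 <= q)%N) (ht : (t < q)%N) :
  exists C : seq (seq 'I_q),
    uniq C /\
    (forall s, (s \in C) = in_Cdet q t s) /\
    tdd_code q t C /\
    is_DEL_det q t (size C) /\
    size C = (\sum_(i < ((q - 1) %/ t.+1).+1)
                    #|[set s : (q - i * t.+1).-tuple 'I_q | uniq s]|)%N /\
    (size C)%:R = (q`!)%:R * \sum_(i < ((q - 1) %/ t.+1).+1)
                                  ((i * t.+1)`!)%:R^-1 :> rat.
Proof.
exists (Cdet q t); split; first exact: uniq_Cdet.
split; first exact: mem_Cdet.
split; first exact: tdd_Cdet.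
split; first exact: is_DEL_det_Cdet.
split; first exact: size_Cdet.
rewrite size_Cdet natr_sum mulr_sumr; apply: eq_bigr => i _.
have le_i : (i * t.+1 <= q)%N.
  by apply: leq_trans (leq_subr 1 q); rewrite -leq_divRL // -ltnS.
by rewrite card_set_uniq_tuples card_ord natr_ffact ?leq_subr // subKn.
Qed.
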